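(* Let $R$ be a ring with identity and involution $*$. Consider the conditions: (1) $R$ is directly finite, i.e. for all $a,b\in R$, $ab=1$ implies $ba=1$; (2) for all $a,b\in R$, if $bab=b$, $(ab)^*=ab$ and $ba^2=a$, then $a$ is core invertible with $a^{\oplus}=b$; (3) for all $a,b\in R$, if $aba=a$, $(ab)^*=ab$ and $ba^2=a$, then $a$ is core invertible with $a^{\oplus}=bab$; (4) for all $a\in R$, if $a^*a=1$, then $aa^*=1$. Then (1) $\Rightarrow$ (2) $\Rightarrow$ (3) $\Rightarrow$ (4).
   Context: An involution on $R$ satisfies $(a^* )^*=a$, $(ab)^*=b^*a^*$, $(a+b)^*=a^*+b^*$. An element $x\in R$ is a core inverse of $a$ if $axa=a$, $xR=aR$ and $Rx=Ra^*$; it is unique when it exists and is denoted $a^{\oplus}$. *)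

From mathcomp Require Import all_boot all_algebra.
Set Implicit Arguments. Unset Strict Implicit. Unset Printing Implicit Defensive.
Import GRing.Theory.
Local Open Scope ring_scope.

Definition involution (R : pzRingType) (star : R -> R) : Prop :=
  [/\ forall a, star (star a) = a,
      forall a b, star (a * b) = star b * star a
    & forall a b, star (a + b) = star a + star b].

Definition in_rideal (R : pzRingType) (x y : R) : Prop := exists r, y = x * r.
Definition in_lideal (R : pzRingType) (x y : R) : Prop := exists r, y = r * x.

Definition core_inverse (R : pzRingType) (star : R -> R) (a x : R) : Prop :=
  [/\ a * x * a = a,
      forall y, in_rideal x y <-> in_rideal a y
    & forall y, in_lideal x y <-> in_lideal (star a) y].

From mathcomp Require Import all_boot all_algebra.
Import GRing.Theory.
Local Open Scope ring_scope.

Set Implicit Arguments.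
Unset Strict Implicit.

(* (1) => (2): with p := 1 - ab and q := 1 - ba, the elements x := b + q and
   y := a + p satisfy xy = 1, hence yx = 1, and since xp = q we get p = yq.
   As q annihilates a and b from the left, so does p: aba = a and ab^2 = b,
   which makes b a core inverse of a.
   (2) => (3): once aba = a, the element bab satisfies the hypotheses of (2).
   (3) => (4): for b := a^*, the core inverse a^* a a^* = a^* gives
   1 = a^* a in a^* R = aR, so a has a right inverse, which must be a^*. *)

Definition directly_finite (R : pzRingType) := forall a b : R, a * b = 1 -> b * a = 1.

Lemma core_inverse_intro (R : pzRingType) (star : R -> R) (a b : R) :
  involution star ->
  a * b * a = a -> b * a * b = b -> star (a * b) = a * b ->
  b * a ^+ 2 = a -> a * (b * b) = b -> core_inverse star a b.
Proof.
case=> _ starM _ aba bab ab_herm ba2a ab2b.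
rewrite expr2 mulrA in ba2a.
split=> // y; split=> -[r ->].
- by exists (b * b * r); rewrite !mulrA -(mulrA a b b) ab2b.
- by exists (a * a * r); rewrite !mulrA ba2a.
- exists (r * b * star b).
  by rewrite -[RHS]mulrA -starM ab_herm -!mulrA (mulrA b a b) bab.
- exists (r * star a * a); rewrite -!mulrA; congr (_ * _).
  by rewrite -{1}aba starM ab_herm.
Qed.

Lemma directly_finite_regular (R : pzRingType) (a b : R) :
  directly_finite R -> b * a * b = b -> b * a ^+ 2 = a ->
  a * b * a = a /\ a * (b * b) = b.
Proof.
move=> dfinR bab; rewrite expr2 mulrA => ba2a.
set p := 1 - a * b; set q := 1 - b * a.
have qa0 : q * a = 0 by rewrite mulrBl mul1r ba2a subrr.
have qb0 : q * b = 0 by rewrite mulrBl mul1r bab subrr.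
have bp0 : b * p = 0 by rewrite mulrBr mulr1 mulrA bab subrr.
have bap : b * a * p = b * a - a * b.
  by rewrite mulrBr mulr1 mulrA -(mulrA b a a) mulrA ba2a.
set x := b + q; set y := a + p.
have xp : x * p = q by rewrite mulrDl bp0 add0r mulrBl mul1r bap opprB addrA subrK.
have xy1 : x * y = 1 by rewrite mulrDr xp mulrDl qa0 addr0 subrKC.
have p_eq : p = y * q by rewrite -xp mulrA (dfinR _ _ xy1) mul1r.
have pa0 : p * a = 0 by rewrite p_eq -mulrA qa0 mulr0.
have pb0 : p * b = 0 by rewrite p_eq -mulrA qb0 mulr0.
split; apply/eqP; rewrite eq_sym -subr_eq0 ?mulrA -[X in X - _]mul1r -mulrBl.
- by rewrite -/p pa0.
- by rewrite -/p pb0.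
Qed.

Lemma inner_inverse_sandwich (R : pzRingType) (a b : R) :
  a * b * a = a -> a * (b * a * b) = a * b /\ b * a * b * a = b * a.
Proof. by move=> aba; split; [rewrite !mulrA | rewrite -!mulrA (mulrA a)]; rewrite aba. Qed.

Lemma left_inverse_is_right (R : pzRingType) (a b s : R) :
  b * a = 1 -> a * s = 1 -> a * b = 1.
Proof. by move=> ba1 as1; rewrite -[LHS]mulr1 -as1 mulrA -(mulrA a) ba1 mulr1. Qed.

Theorem theorem3p10 (R : pzRingType) (star : R -> R) (Hstar : involution star) :
  let C1 := forall a b : R, a * b = 1 -> b * a = 1 in
  let C2 := forall a b : R, b * a * b = b -> star (a * b) = a * b ->
              b * a ^+ 2 = a -> core_inverse star a b in
  let C3 := forall a b : R, a * b * a = a -> star (a * b) = a * b ->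
              b * a ^+ 2 = a -> core_inverse star a (b * a * b) in
  let C4 := forall a : R, star a * a = 1 -> a * star a = 1 in
  (C1 -> C2) /\ (C2 -> C3) /\ (C3 -> C4).
Proof.
move=> C1 C2 C3 C4; split; [|split].
- move=> dfinR a b bab ab_herm ba2a.
  have [aba ab2b] := directly_finite_regular dfinR bab ba2a.
  exact: core_inverse_intro.
- move=> C2R a b aba ab_herm ba2a.
  have [a_bab bab_a] := inner_inverse_sandwich aba.
  apply: C2R; rewrite ?a_bab //.
    by rewrite bab_a !mulrA bab_a.
  by rewrite expr2 mulrA bab_a -mulrA -expr2.
- move=> C3R a a_iso.
  case: Hstar => star_inv starM _.
  have [_ rideal_eq _] : core_inverse star a (star a * a * star a).
    apply: C3R; first by rewrite -mulrA a_iso mulr1.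
      by rewrite starM star_inv.
    by rewrite expr2 mulrA a_iso mul1r.
  have [s as1] : in_rideal a 1.
    by apply/rideal_eq; exists a; rewrite a_iso mul1r a_iso.
  exact: (left_inverse_is_right a_iso (esym as1)).
Qed.
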